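(* For all integers $n$ and $d$ with $3\leq d<\left\lceil\frac{n}{2}\right\rceil$, $$t(n,d)\leq n-2+\left\lceil\frac{n}{d-1}\right\rceil.$$
   Context: All graphs are finite, simple and undirected. In an edge-colored graph (adjacent edges may receive the same color), a path is a rainbow path if no two of its edges have the same color. A graph $G$ is $d$-rainbow connected if there is an edge-coloring of $G$ using $d$ colors such that every two distinct vertices of $G$ are joined by a rainbow path. For positive integers $n$ and $d$, $t(n,d)$ denotes the minimum number of edges of a $d$-rainbow connected graph on $n$ vertices. *)

From mathcomp Require Import all_boot.
From Stdlib Require Import ClassicalEpsilon.
Set Implicit Arguments. Unset Strict Implicit. Unset Printing Implicit Defensive.

Definition simple_graph (n : nat) (E : {set {set 'I_n}}) : Prop :=
  forall e, e \in E -> #|e| = 2.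

(* An edge-colouring with d colours: a colour in 'I_d for every pair
   (only its values on edges matter; adjacent edges may share colours). *)

(* p : seq 'I_n describes the vertex sequence u :: p; it is a path of E from
   u to v (no repeated vertices) whose edges have pairwise distinct colours. *)
Definition rainbow_path (n d : nat) (E : {set {set 'I_n}})
    (c : {set 'I_n} -> 'I_d) (u v : 'I_n) (p : seq 'I_n) : Prop :=
  [/\ path (fun x y => [set x; y] \in E) u p,
      last u p = v,
      uniq (u :: p) &
      uniq (map c (pairmap (fun x y => [set x; y]) u p))].

Definition rainbow_connected (n d : nat) (E : {set {set 'I_n}}) : Prop :=
  exists c : {set 'I_n} -> 'I_d,
    forall u v : 'I_n, u != v -> exists p, rainbow_path E c u v p.

Definition has_rc_graph (n d m : nat) : bool :=
  if excluded_middle_informative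
       (exists E : {set {set 'I_n}},
          [/\ simple_graph E, #|E| = m & rainbow_connected d E])
  then true else false.

(* t(n,d): minimum number of edges of a d-rainbow connected graph on n
   vertices (defaults to 0 when no such graph exists, e.g. d = 0, n >= 2). *)
Definition t (n d : nat) : nat :=
  match excluded_middle_informative (exists m, has_rc_graph n d m) with
  | left H => ex_minn H
  | right _ => 0
  end.

From mathcomp Require Import all_boot zify.
From Stdlib Require Import ClassicalEpsilon.
Set Implicit Arguments. Unset Strict Implicit. Unset Printing Implicit Defensive.

(* Write D = d - 1 and n = N + 1.  Take a hub vertex 0 and split the other N
   vertices into N %/ D blocks of D consecutive vertices plus fewer than D
   leftover ones.  Each block closes up with the hub into a cycle of length
   D + 1 whose edges, walking from the hub around the cycle, get the colours
   0, 1, ..., D; each leftover vertex hangs on the hub with its own colour.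
   This gives N + N %/ D = n - 2 + ceil(n / (d - 1)) edges.  The i-th vertex
   of a cycle reaches the hub with the colours {0, ..., i - 1} one way round
   and {i, ..., D} the other way, so two vertices outside a common cycle are
   joined through the hub by letting them leave in opposite directions, and
   two vertices of one cycle are joined along it. *)

Lemma last_rev_belast (T : Type) (x : T) (s : seq T) :
  last (last x s) (rev (belast x s)) = x.
Proof. by case/lastP: s => // s z; rewrite last_rcons belast_rcons rev_cons last_rcons. Qed.

Lemma pairmap_rev (T U : Type) (f : T -> T -> U) (x : T) (s : seq T) :
  (forall a b, f a b = f b a) ->
  pairmap f (last x s) (rev (belast x s)) = rev (pairmap f x s).
Proof.
move=> f_sym; elim: s x => //= y s IH x.
by rewrite rev_cons -cats1 pairmap_cat IH last_rev_belast rev_cons -cats1 f_sym.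
Qed.

Lemma map_pairmap_map (T T' U U' : Type) (g : T -> T') (f : T' -> T' -> U)
    (h : U -> U') (x : T) (s : seq T) :
  map h (pairmap f (g x) (map g s)) = pairmap (fun a b => h (f (g a) (g b))) x s.
Proof. by elim: s x => //= y s IH x; rewrite IH. Qed.

Lemma pairmap_iota (U : Type) (f : nat -> nat -> U) (m l : nat) :
  pairmap f m (iota m.+1 l) = [seq f j j.+1 | j <- iota m l].
Proof. by elim: l m => //= l IH m; rewrite IH. Qed.

Lemma belast_iota (m l : nat) : belast m (iota m.+1 l) = iota m l.
Proof. by elim: l m => //= l IH m; rewrite IH. Qed.

Section RainbowWalks.
Variables (T C : eqType) (e : rel T) (col : T -> T -> C).

Definition rainbow (x y : T) (s : seq T) : Prop :=
  [/\ path e x s, last x s = y, uniq (x :: s) & uniq (pairmap col x s)].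

Lemma rainbow_edge (x y : T) : e x y -> x != y -> rainbow x y [:: y].
Proof. by move=> exy xy; split; rewrite /= ?exy ?inE ?xy. Qed.

Lemma rainbow_cat (x z y : T) (s1 s2 : seq T) :
  rainbow x z s1 -> rainbow z y s2 ->
  (forall v, v \in x :: s1 -> v \notin s2) ->
  (forall a, a \in pairmap col x s1 -> a \notin pairmap col z s2) ->
  rainbow x y (s1 ++ s2).
Proof.
case=> p1 l1 u1 c1 [p2 l2 + c2] dv dc; rewrite cons_uniq => /andP[_ u2]; split.
- by rewrite cat_path p1 l1.
- by rewrite last_cat l1.
- rewrite -cat_cons cat_uniq u1 u2 andbT.
  by apply/hasPn => v v_s2; apply/negP => /dv; rewrite v_s2.
- rewrite pairmap_cat l1 cat_uniq c1 c2 andbT.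
  by apply/hasPn => a a_c2; apply/negP => /dc; rewrite a_c2.
Qed.

Hypotheses (e_sym : symmetric e) (col_sym : forall x y, col x y = col y x).

Lemma rainbow_rev (x y : T) (s : seq T) :
  rainbow x y s -> rainbow y x (rev (belast x s)).
Proof.
case=> p l u c; rewrite -l; split.
- by rewrite rev_path (eq_path (e' := e)) // => a b; rewrite e_sym.
- exact: last_rev_belast.
- by rewrite -rev_rcons -lastI rev_uniq.
- by rewrite pairmap_rev // rev_uniq.
Qed.

Lemma rainbow_through (h x y : T) (s1 s2 : seq T) :
  rainbow h x s1 -> rainbow h y s2 ->
  (forall v, v \in s1 -> v \notin s2) ->
  (forall a, a \in pairmap col h s1 -> a \notin pairmap col h s2) ->
  rainbow x y (rev (belast h s1) ++ s2).
Proof.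
move=> r1 r2 dv dc; have [_ l1 _ _] := r1.
have [_ _ + _] := r2; rewrite cons_uniq => /andP[h_s2 _].
apply: rainbow_cat (rainbow_rev r1) r2 _ _ => [v|a].
  rewrite -l1 -rev_rcons -lastI mem_rev inE.
  by case/predU1P => [->|v_s1] //; apply: dv.
by rewrite -l1 pairmap_rev // mem_rev => /dc.
Qed.

End RainbowWalks.

Lemma rainbow_iota (C : eqType) (e : rel nat) (col : nat -> nat -> C) (m l : nat) :
  (forall j, m <= j < m + l -> e j j.+1) ->
  uniq [seq col j j.+1 | j <- iota m l] ->
  rainbow e col m (m + l) (iota m.+1 l).
Proof.
move=> e_step col_uniq; split.
- elim: l m e_step {col_uniq} => //= l IH m e_step.
  by rewrite e_step ?IH // => [j j_bd|]; [apply: e_step|]; lia.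
- by elim: l m {e_step col_uniq} => [|l IH] m; rewrite ?addn0 //= IH addSnnS.
- exact: (iota_uniq m l.+1).
- by rewrite pairmap_iota.
Qed.

Section HubGraph.
Variables D N : nat.
Hypothesis D_gt1 : 1 < D.
Local Notation V := 'I_N.+1.

Definition cycle_end := N %/ D * D.

Lemma cycle_end_le : cycle_end <= N.
Proof. exact: leq_divM. Qed.

Lemma ltn_cycle_end_addD : N < cycle_end + D.
Proof. by rewrite /cycle_end {1}(divn_eq N D) ltn_add2l ltn_pmod //; lia. Qed.

Lemma block_sep q1 q2 : q1 < q2 -> q1 * D + D <= q2 * D.
Proof. by move=> lt_q; rewrite -mulSnr leq_mul2r lt_q orbT. Qed.

Lemma block_le_cycle_end q : q < N %/ D -> q * D + D <= cycle_end.
Proof. exact: block_sep. Qed.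

Lemma dvdn_block q i : (D %| q * D + i) = (D %| i).
Proof. by rewrite dvdn_addr ?dvdn_mull. Qed.

Lemma modn_block q i : i < D -> (q * D + i) %% D = i.
Proof. by move=> lt_iD; rewrite modnMDl modn_small. Qed.

(* Block q consists of the vertices q * D + 1, ..., q * D + D; the vertices
   above cycle_end are the leftover ones.  The tree edges {parent v, v} join
   consecutive vertices of a block and hang block starts and leftovers on
   the hub; the second family closes each block into a cycle. *)
Definition parent (v : nat) : nat :=
  if (v <= cycle_end) && ~~ (D %| v.-1) then v.-1 else 0.

Definition hub_graph : {set {set V}} :=
  [set [set inord (parent v); v] | v : V in [set~ ord0]] :|:
  [set [set ord0; inord (q * D + D)] | q : 'I_(N %/ D)].

Definition hub_colour (e : {set V}) : 'I_D.+1 :=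
  let m := \max_(x in e) val x in
  if [&& ord0 \in e, D %| m & m <= cycle_end] then ord_max else inord (m.-1 %% D).

(* The graph seen on nat labels; the bounds keep paths inside 'I_N.+1. *)
Definition hub_adj (a b : nat) : bool :=
  [&& a <= N, b <= N & [set inord a; inord b] \in hub_graph].

Definition hub_col (a b : nat) : nat := hub_colour [set inord a; inord b].

Lemma hub_adj_sym : symmetric hub_adj.
Proof. by move=> a b; rewrite /hub_adj setUC andbCA. Qed.

Lemma hub_col_sym a b : hub_col a b = hub_col b a.
Proof. by rewrite /hub_col setUC. Qed.

Lemma hub_adj_parent v : 0 < v <= N -> hub_adj (parent v) v.
Proof.
case/andP=> v_gt0 v_le; have par_le : parent v <= N by rewrite /parent; case: ifP; lia.
rewrite /hub_adj par_le v_le; apply/setUP; left.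
have -> : parent v = parent (inord v : V) by rewrite inordK.
apply: imset_f; rewrite in_setC1 -(inj_eq val_inj) /= inordK //; lia.
Qed.

Lemma hub_colE a b : a != b -> a <= N -> b <= N ->
  hub_col a b = if [&& (a == 0) || (b == 0), D %| maxn a b & maxn a b <= cycle_end]
                then D else (maxn a b).-1 %% D.
Proof.
move=> ab aN bN; have inj : (inord a : V) != inord b.
  by apply: contra ab => /eqP/(congr1 val); rewrite /= !inordK // => ->.
rewrite /hub_col /hub_colour big_setU1 ?inE // big_set1 /= !inordK //.
have zero_in x : x <= N -> (ord0 == inord x :> V) = (x == 0).
  by move=> xN; rewrite -(inj_eq val_inj) /= inordK // eq_sym.
rewrite !zero_in //; case: ifP => // _; rewrite inordK //.
by have := ltn_pmod (maxn a b).-1 (ltnW D_gt1); lia.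
Qed.

Lemma hub_adj_pendant v : cycle_end < v <= N -> hub_adj 0 v.
Proof.
move=> v_bd; have := @hub_adj_parent v.
by rewrite /parent ifF; [apply|]; lia.
Qed.

Lemma hub_col_pendant v : cycle_end < v <= N -> hub_col 0 v = v.-1 - cycle_end.
Proof.
move=> v_bd; have v_lt := ltn_cycle_end_addD.
rewrite hub_colE ?max0n ?ifF; try lia.
have -> : v.-1 = cycle_end + (v.-1 - cycle_end) by lia.
by rewrite modn_block; lia.
Qed.

Definition spoke (y : nat) (P A : pred nat) : Prop :=
  exists s, [/\ rainbow hub_adj hub_col 0 y s, all P s & all A (pairmap hub_col 0 s)].

Lemma spoke_hub : spoke 0 pred0 pred0.
Proof. by exists [::]. Qed.

Lemma spoke_pendant v : cycle_end < v <= N ->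
  spoke v (pred1 v) (pred1 (v.-1 - cycle_end)).
Proof.
move=> v_bd; exists [:: v]; split; rewrite /= ?hub_col_pendant ?eqxx //.
by apply: rainbow_edge; [apply: hub_adj_pendant | rewrite eq_sym -lt0n; lia].
Qed.

Section Block.
Variable q : nat.
Hypothesis q_lt : q < N %/ D.

Let block_le : q * D + D <= cycle_end := block_le_cycle_end q_lt.
Let end_le : cycle_end <= N := cycle_end_le.

Lemma hub_adj_entry : hub_adj 0 (q * D + 1).
Proof.
have := @hub_adj_parent (q * D + 1).
by rewrite /parent addn1 /= dvdn_mull ?andbF //; apply; lia.
Qed.

Lemma hub_col_entry : hub_col 0 (q * D + 1) = 0.
Proof.
rewrite hub_colE; try lia.
by rewrite max0n dvdn_block gtnNdvd // addn1 /= modnMl.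
Qed.

Lemma hub_adj_step i : 0 < i < D -> hub_adj (q * D + i) (q * D + i).+1.
Proof.
move=> i_bd; have := @hub_adj_parent (q * D + i).+1.
rewrite /parent /= dvdn_block gtnNdvd; try lia.
by rewrite andbT ifT; [apply|]; lia.
Qed.

Lemma hub_col_step i : 0 < i < D -> hub_col (q * D + i) (q * D + i).+1 = i.
Proof.
move=> i_bd; rewrite hub_colE; try lia.
rewrite (_ : maxn _ _ = (q * D + i).+1) /=; last lia.
by rewrite ifF ?modn_block //; lia.
Qed.

Lemma hub_adj_chord : hub_adj 0 (q * D + D).
Proof.
rewrite /hub_adj (_ : q * D + D <= N) /=; last lia.
apply/setUP; right; apply/imsetP; exists (Ordinal q_lt) => //=.
by congr [set _; _]; apply: val_inj; rewrite /= inordK.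
Qed.

Lemma hub_col_chord : hub_col 0 (q * D + D) = D.
Proof.
rewrite hub_colE; try lia.
by rewrite max0n dvdn_block dvdnn block_le.
Qed.

Lemma block_run_colours i j : 0 < i -> i <= j -> j <= D ->
  [seq hub_col m m.+1 | m <- iota (q * D + i) (j - i)] = iota i (j - i).
Proof.
move=> i_gt0 i_le j_le; rewrite iotaDl -map_comp -[RHS]map_id.
by apply/eq_in_map => m; rewrite mem_iota => m_bd; apply: hub_col_step; lia.
Qed.

Lemma block_run i j : 0 < i -> i <= j -> j <= D ->
  rainbow hub_adj hub_col (q * D + i) (q * D + j) (iota (q * D + i).+1 (j - i)).
Proof.
move=> i_gt0 i_le j_le; have -> : q * D + j = q * D + i + (j - i) by lia.
apply: rainbow_iota => [m m_bd|]; last by rewrite block_run_colours ?iota_uniq.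
have -> : m = q * D + (m - q * D) by lia.
apply: hub_adj_step; lia.
Qed.

Lemma spoke_lower i : 0 < i <= D ->
  spoke (q * D + i) (fun v => q * D < v <= q * D + D) (fun a => a < i).
Proof.
case/andP=> i_gt0 i_le.
have run := block_run (isT : 0 < 1) i_gt0 i_le.
have run_cols := block_run_colours (isT : 0 < 1) i_gt0 i_le.
rewrite -pairmap_iota in run_cols.
have cols : pairmap hub_col 0 ((q * D + 1) :: iota (q * D + 1).+1 (i - 1)) =
            0 :: iota 1 (i - 1) by rewrite /= hub_col_entry run_cols.
exists ((q * D + 1) :: iota (q * D + 1).+1 (i - 1)); split.
- apply: (rainbow_cat (z := q * D + 1) (s1 := [:: _])) run _ _.
  + by apply: rainbow_edge; [apply: hub_adj_entry | rewrite eq_sym addn1].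
  + by move=> v; rewrite !inE mem_iota; lia.
  + by move=> a; rewrite run_cols /= hub_col_entry !inE mem_iota; lia.
- by apply/allP => v; rewrite inE mem_iota; lia.
- by rewrite cols; apply/allP => a; rewrite inE mem_iota; lia.
Qed.

Lemma spoke_upper i : 0 < i <= D ->
  spoke (q * D + i) (fun v => q * D < v <= q * D + D) (fun a => i <= a).
Proof.
case/andP=> i_gt0 i_le.
have run := block_run i_gt0 i_le (leqnn D).
have run_cols := block_run_colours i_gt0 i_le (leqnn D).
rewrite -pairmap_iota in run_cols.
have [_ run_last _ _] := run.
have back := rainbow_rev hub_adj_sym hub_col_sym run.
have back_cols : pairmap hub_col (q * D + D)
    (rev (belast (q * D + i) (iota (q * D + i).+1 (D - i)))) = rev (iota i (D - i)).
  by rewrite -run_last pairmap_rev ?run_cols //; exact: hub_col_sym.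
rewrite belast_iota in back back_cols.
have cols : pairmap hub_col 0 ((q * D + D) :: rev (iota (q * D + i) (D - i))) =
            D :: rev (iota i (D - i)) by rewrite /= hub_col_chord back_cols.
exists ((q * D + D) :: rev (iota (q * D + i) (D - i))); split.
- apply: (rainbow_cat (z := q * D + D) (s1 := [:: _])) back _ _.
  + by apply: rainbow_edge; [apply: hub_adj_chord | rewrite eq_sym addn_eq0 negb_and; lia].
  + by move=> v; rewrite !inE mem_rev mem_iota; lia.
  + by move=> a; rewrite back_cols /= hub_col_chord !inE mem_rev mem_iota; lia.
- by apply/allP => v; rewrite inE mem_rev mem_iota; lia.
- by rewrite cols; apply/allP => a; rewrite inE mem_rev mem_iota; lia.
Qed.

End Block.

Lemma join_spokes x y P1 A1 P2 A2 : spoke x P1 A1 -> spoke y P2 A2 ->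
  (forall v, P1 v -> P2 v -> False) -> (forall a, A1 a -> A2 a -> False) ->
  exists s, rainbow hub_adj hub_col x y s.
Proof.
case=> [s1 [r1 /allP P_s1 /allP A_s1]] [s2 [r2 /allP P_s2 /allP A_s2]] dP dA.
exists (rev (belast 0 s1) ++ s2).
apply: (rainbow_through hub_adj_sym hub_col_sym r1 r2) => [v|a] in1; apply/negP => in2.
  exact: dP (P_s1 v in1) (P_s2 v in2).
exact: dA (A_s1 a in1) (A_s2 a in2).
Qed.

Variant vertex_spec (v : nat) : Prop :=
  | VertexHub of v = 0
  | VertexCycle q i of q < N %/ D & 0 < i <= D & v = q * D + i
  | VertexPendant of cycle_end < v.

Lemma vertexP v : vertex_spec v.
Proof.
have [->|v_gt0] := posnP v; first exact: VertexHub.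
have [v_le|] := leqP v cycle_end; last exact: VertexPendant.
apply: (@VertexCycle v (v.-1 %/ D) (v.-1 %% D).+1).
- by rewrite ltn_divLR -/cycle_end; lia.
- by rewrite ltn_pmod //; lia.
- by have := divn_eq v.-1 D; lia.
Qed.

Lemma hub_rainbow_connected_nat x y : x <= N -> y <= N -> x != y ->
  exists s, rainbow hub_adj hub_col x y s.
Proof.
wlog lt_xy : x y / x < y.
  move=> sym xN yN xy; have [lt|lt|eq] := ltngtP x y; first exact: sym.
    have [s r] := sym y x lt yN xN (negbT (ltn_eqF lt)).
    by exists (rev (belast y s)); exact: (rainbow_rev hub_adj_sym hub_col_sym r).
  by rewrite eq eqxx in xy.
move=> xN yN _.
have [x0|q i q_lt i_bd xE|x_pend] := vertexP x;
  have [y0|q' j q'_lt j_bd yE|y_pend] := vertexP y; subst; try lia.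
- exact: join_spokes spoke_hub (spoke_lower q'_lt j_bd) _ _.
- have y_pend' : cycle_end < y <= N by lia.
  exact: join_spokes spoke_hub (spoke_pendant y_pend') _ _.
- have [lt_q|lt_q'|eq_q] := ltngtP q q'; last subst q'.
  + have sep := block_sep lt_q; case: (leqP i j) => ij.
      by apply: join_spokes (spoke_lower q_lt i_bd) (spoke_upper q'_lt j_bd) _ _
        => v /= Pv1 Pv2; lia.
    by apply: join_spokes (spoke_upper q_lt i_bd) (spoke_lower q'_lt j_bd) _ _
      => v /= Pv1 Pv2; lia.
  + by have sep := block_sep lt_q'; lia.
  + by exists (iota (q * D + i).+1 (j - i)); apply: block_run; lia.
- have y_pend' : cycle_end < y <= N by lia.
  have block_le := block_le_cycle_end q_lt.
  case: (ltnP (y.-1 - cycle_end) i) => ij.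
    by apply: join_spokes (spoke_upper q_lt i_bd) (spoke_pendant y_pend') _ _
      => v /= Pv1 Pv2; lia.
  by apply: join_spokes (spoke_lower q_lt i_bd) (spoke_pendant y_pend') _ _
    => v /= Pv1 Pv2; lia.
- by have block_le := block_le_cycle_end q'_lt; lia.
- have x_pend' : cycle_end < x <= N by lia.
  have y_pend' : cycle_end < y <= N by lia.
  by apply: join_spokes (spoke_pendant x_pend') (spoke_pendant y_pend') _ _
    => v /= Pv1 Pv2; lia.
Qed.

Lemma path_hub_adj_le x s : path hub_adj x s -> all (fun v => v <= N) s.
Proof. by elim: s x => //= y s IH x /andP[/and3P[_ -> _] /IH]. Qed.

Lemma rainbow_inord x y s : x <= N -> rainbow hub_adj hub_col x y s ->
  rainbow_path hub_graph hub_colour (inord x) (inord y) (map inord s).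
Proof.
move=> xN [p l u c]; have /allP sN := path_hub_adj_le p.
have inord_inj : {in x :: s &, injective (@inord N)}.
  have le_N v : v \in x :: s -> v <= N by rewrite inE => /predU1P[->|/sN].
  by move=> a b /le_N aN /le_N bN /(congr1 val); rewrite /= !inordK.
split.
- by rewrite path_map; apply: (sub_path _ p) => a b /and3P[_ _ ab]; exact: ab.
- by rewrite last_map l.
- by rewrite -map_cons (map_inj_in_uniq inord_inj); exact: u.
- by rewrite -(map_inj_uniq (@ord_inj D.+1)) -map_comp map_pairmap_map; exact: c.
Qed.

Lemma hub_graph_rainbow_connected : rainbow_connected D.+1 hub_graph.
Proof.
exists hub_colour => u v uv.
have [s r] := hub_rainbow_connected_nat (ltn_ord u) (ltn_ord v) uv.
exists (map inord s); rewrite -[u]inord_val -[v]inord_val.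
exact: rainbow_inord (ltn_ord u) r.
Qed.

Lemma hub_graph_simple : simple_graph hub_graph.
Proof.
move=> e /setUP[] /imsetP[v v_in ->]; rewrite cards2.
  rewrite in_setC1 -(inj_eq val_inj) /= in v_in.
  have par_lt : parent v < v by rewrite /parent; case: ifP; lia.
  by rewrite -(inj_eq val_inj) /= inordK ?(ltn_trans par_lt) // neq_ltn par_lt.
have block_le := block_le_cycle_end (ltn_ord v); have end_le := cycle_end_le.
by rewrite -(inj_eq val_inj) /= inordK; lia.
Qed.

Lemma card_hub_graph : #|hub_graph| <= N + N %/ D.
Proof.
apply: leq_trans (leq_card_setU _ _) _; apply: leq_add.
  by apply: leq_trans (leq_imset_card _ _) _; rewrite cardsC1 card_ord.
by apply: leq_trans (leq_imset_card _ _) _; rewrite card_ord.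
Qed.

End HubGraph.

Lemma t_le_card n d (E : {set {set 'I_n}}) :
  simple_graph E -> rainbow_connected d E -> t n d <= #|E|.
Proof.
move=> simpleE rcE.
have rc_card : has_rc_graph n d #|E|.
  by rewrite /has_rc_graph; case: excluded_middle_informative => // -[]; exists E.
rewrite /t; case: excluded_middle_informative => [ex|[]]; last by exists #|E|.
by case: ex_minnP => m _ /(_ _ rc_card).
Qed.

Theorem proposition3 (n d : nat) :
  3 <= d -> d < n.+1 %/ 2 ->
  t n d <= n - 2 + (n + (d - 2)) %/ (d - 1).
Proof.
(* The hypothesis d < ceil(n / 2) only serves to rule out n = 0. *)
case: d => // D D_gt1; case: n => [//|N] _.
have rc := hub_graph_rainbow_connected N D_gt1.
apply: leq_trans (t_le_card (hub_graph_simple D_gt1) rc) _.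
apply: leq_trans (card_hub_graph D N) _.
have -> : N.+1 + (D.+1 - 2) = N + 1 * D by lia.
by rewrite subn1 divnDMl; lia.
Qed.
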